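(* Let $$k_u=\frac{1}{2\pi}\Big(1+\sqrt2\sum_{m=1}^{\infty}\frac{\beta_m}{\sinh\beta_m}\Big).$$ Then $k_u<\infty$, and the PZD conditional density satisfies the following bounds. (1) For all $r>0$, $r_0\ge0$ and $\phi,\phi_0\in[0,2\pi)$: $$p(r,\phi\mid r_0,\phi_0)<k_u\,p_{R|R_0}(r\mid r_0).$$ Moreover, for all $r,r_0\ge0$: $$p_{R|R_0}(r\mid r_0)\le\frac{2r}{\sigma^2\mathcal L}e^{-\frac{(r-r_0)^2}{\sigma^2\mathcal L}}\le\frac{2r}{\sigma^2\mathcal L}.$$ (2) For all $r,r_0\ge0$ and $\phi,\phi_0$: $$p(r,\phi\mid r_0,\phi_0)\ge\frac{1}{2\pi}\,p_{R|R_0}(r\mid r_0)\,(1-\xi(r_0)),$$ where $$\xi(r_0)=\sqrt2\,e^{-\left(\Re(a_1)-\frac{1}{\sigma^2\mathcal L}\right)r_0^2}\sum_{m=1}^\infty\frac{\beta_m}{\sinh\beta_m}.$$ Furthermore, $\xi(r_0)\to0$ as $r_0\to\infty$.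
   Context: Fix constants $\gamma>0$, $\sigma>0$, $\mathcal L>0$, and let $j=\sqrt{-1}$. For $m\in\mathbb N$ let $\beta_m=\sqrt{m\gamma/2}\,\sigma\mathcal L$ and $$a_m=\frac{\sqrt{jm\gamma}}{\sigma}\coth\!\big(\sqrt{jm\gamma\sigma^2}\,\mathcal L\big),\qquad b_m=\frac{\sqrt{jm\gamma}}{\sigma}\,\frac{1}{\sinh\!\big(\sqrt{jm\gamma\sigma^2}\,\mathcal L\big)},$$ with principal square roots. $I_m$ denotes the modified Bessel function of the first kind of order $m$. The PZD channel conditional density (input polar coordinates $(r_0,\phi_0)$, output polar coordinates $(r,\phi)$) is $$p(r,\phi\mid r_0,\phi_0)=\frac{1}{2\pi}p_{R|R_0}(r\mid r_0)+\frac1\pi\sum_{m\ge1}\Re\!\Big(C_m(r,r_0)\,e^{jm(\phi-\phi_0-\gamma r_0^2\mathcal L)}\Big),$$ where $$p_{R|R_0}(r\mid r_0)=\frac{2r}{\sigma^2\mathcal L}e^{-\frac{r^2+r_0^2}{\sigma^2\mathcal L}}I_0\!\Big(\frac{2rr_0}{\sigma^2\mathcal L}\Big),\qquad C_m(r,r_0)=r\,b_m\,e^{-a_m(r^2+r_0^2)}I_m(2b_m r_0 r).$$ *)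

From Stdlib Require Import Reals Lra Arith Factorial ClassicalEpsilon.
Open Scope R_scope.

Definition Cx : Type := (R * R)%type.
Definition Cre (z : Cx) : R := fst z.
Definition Cim (z : Cx) : R := snd z.
Definition Creal (x : R) : Cx := (x, 0).
Definition Cj : Cx := (0, 1).
Definition Cadd (z w : Cx) : Cx := (fst z + fst w, snd z + snd w).
Definition Cneg (z : Cx) : Cx := (- fst z, - snd z).
Definition Cmul (z w : Cx) : Cx :=
  (fst z * fst w - snd z * snd w, fst z * snd w + snd z * fst w).
Definition Cscal (a : R) (z : Cx) : Cx := (a * fst z, a * snd z).
Definition Cinv (z : Cx) : Cx :=
  let d := fst z * fst z + snd z * snd z in (fst z / d, - snd z / d).
Definition Cdiv (z w : Cx) : Cx := Cmul z (Cinv w).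
Fixpoint Cpow (z : Cx) (n : nat) : Cx :=
  match n with O => (1, 0) | S k => Cmul z (Cpow z k) end.
Definition Cexp (z : Cx) : Cx := (exp (fst z) * cos (snd z), exp (fst z) * sin (snd z)).
(* principal square root (branch cut on the negative real axis, Re >= 0) *)
Definition Csqrt (z : Cx) : Cx :=
  let r := sqrt (fst z * fst z + snd z * snd z) in
  (sqrt ((r + fst z) / 2),
   if Rle_dec 0 (snd z) then sqrt ((r - fst z) / 2) else - sqrt ((r - fst z) / 2)).
Definition Csinh (z : Cx) : Cx := Cscal (/ 2) (Cadd (Cexp z) (Cneg (Cexp (Cneg z)))).
Definition Ccosh (z : Cx) : Cx := Cscal (/ 2) (Cadd (Cexp z) (Cexp (Cneg z))).
Definition Ccoth (z : Cx) : Cx := Cdiv (Ccosh z) (Csinh z).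

Definition Rseries (f : nat -> R) : R :=
  epsilon (inhabits 0) (fun l => infinite_sum f l).
Definition Csum (f : nat -> Cx) (n : nat) : Cx :=
  (sum_f_R0 (fun k => fst (f k)) n, sum_f_R0 (fun k => snd (f k)) n).
Definition Cseries (f : nat -> Cx) : Cx :=
  (Rseries (fun k => fst (f k)), Rseries (fun k => snd (f k))).

Definition BesselI (m : nat) (z : Cx) : Cx :=
  Cseries (fun k => Cscal (/ (INR (fact k) * INR (fact (k + m))))
                          (Cpow (Cscal (/ 2) z) (2 * k + m))).
Definition BesselI_R (m : nat) (x : R) : R := fst (BesselI m (Creal x)).

Definition beta (gamma sigma L : R) (m : nat) : R :=
  sqrt (INR m * gamma / 2) * sigma * L.

Definition a_m (gamma sigma L : R) (m : nat) : Cx :=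
  Cmul (Cscal (/ sigma) (Csqrt (Cscal (INR m * gamma) Cj)))
       (Ccoth (Cscal L (Csqrt (Cscal (INR m * gamma * sigma ^ 2) Cj)))).
Definition b_m (gamma sigma L : R) (m : nat) : Cx :=
  Cmul (Cscal (/ sigma) (Csqrt (Cscal (INR m * gamma) Cj)))
       (Cinv (Csinh (Cscal L (Csqrt (Cscal (INR m * gamma * sigma ^ 2) Cj))))).

Definition pR (gamma sigma L : R) (r r0 : R) : R :=
  2 * r / (sigma ^ 2 * L) * exp (- (r ^ 2 + r0 ^ 2) / (sigma ^ 2 * L))
  * BesselI_R 0 (2 * r * r0 / (sigma ^ 2 * L)).

Definition Cm (gamma sigma L : R) (m : nat) (r r0 : R) : Cx :=
  Cmul (Cscal r (b_m gamma sigma L m))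
    (Cmul (Cexp (Cneg (Cscal (r ^ 2 + r0 ^ 2) (a_m gamma sigma L m))))
          (BesselI m (Cscal (2 * r0 * r) (b_m gamma sigma L m)))).

(* p(r, phi | r0, phi0) ; the series is over m >= 1 (index n = m - 1) *)
Definition pdens (gamma sigma L : R) (r phi r0 phi0 : R) : R :=
  / (2 * PI) * pR gamma sigma L r r0
  + / PI * Rseries (fun n =>
      let m := S n in
      fst (Cmul (Cm gamma sigma L m r r0)
                (Cexp (0, INR m * (phi - phi0 - gamma * r0 ^ 2 * L))))).

(* the series sum_{m>=1} beta_m / sinh beta_m, as a function of n = m - 1 *)
Definition bterm (gamma sigma L : R) (n : nat) : R :=
  beta gamma sigma L (S n) / sinh (beta gamma sigma L (S n)).

Definition k_u (gamma sigma L : R) : R :=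
  / (2 * PI) * (1 + sqrt 2 * Rseries (bterm gamma sigma L)).

Definition xi (gamma sigma L : R) (r0 : R) : R :=
  sqrt 2 * exp (- (fst (a_m gamma sigma L 1) - / (sigma ^ 2 * L)) * r0 ^ 2)
  * Rseries (bterm gamma sigma L).

(* Put kappa = 1/(sigma^2 L) and z = (1+j) beta_m; then a_m = kappa z coth z and
   b_m = kappa z / sinh z.  With u = 2 beta and P = cosh - cos, one has
   Re (z coth z) = (u/2) P'(u) / P(u), and P = sum_n c_n u^n has nonnegative Taylor
   coefficients, zero for n < 2 and positive for n = 6.  Chebyshev's sum inequality on the
   partial sums makes u P'/P > 2 and nondecreasing, so Re a_m >= Re a_1 > kappa; likewise
   P(u) >= u^2 gives |b_m| <= kappa and |b_m| <= sqrt 2 kappa beta_m / sinh beta_m.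
   Bounding the Bessel series termwise, |I_m(w)| <= I_m(|w|) <= I_0(|w|) - 1/2 for m >= 1,
   so the m-th angular term is at most
   sqrt 2 r kappa exp(-(r^2 + r0^2) Re a_1) (I_0(2 kappa r r0) - 1/2) beta_m / sinh beta_m,
   which is summable since sinh x >= x^5/240 and beta_m^2 is linear in m.  Comparing with
   p_R = 2 r kappa exp(-kappa (r^2 + r0^2)) I_0(2 kappa r r0) gives both bounds, and
   I_0(x) <= e^x gives the Gaussian bound on p_R. *)

From Pilot Require Import Defs.
From Stdlib Require Import Reals Lra Lia Psatz Factorial ClassicalEpsilon FunctionalExtensionality.
From Coquelicot Require Import Coquelicot.
(* Coquelicot's [Cpow], [Cinv] and [Cdiv] would otherwise shadow those of [Defs]. *)
Import Pilot.Defs.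
Open Scope R_scope.

Lemma exp_le_compat x y : x <= y -> exp x <= exp y.
Proof.
  intro h; destruct (Rle_lt_or_eq_dec _ _ h) as [h' | ->]; [left; apply exp_increasing|]; lra.
Qed.

Lemma exp_opp_mul x : exp x * exp (- x) = 1.
Proof. rewrite <- exp_plus, Rplus_opp_r, exp_0. reflexivity. Qed.

Lemma exp_double x : exp (2 * x) = exp x * exp x /\ exp (- (2 * x)) = exp (- x) * exp (- x).
Proof.
  split; rewrite <- exp_plus; f_equal; ring.
Qed.

Lemma cosh_sq x : cosh x ^ 2 = 1 + sinh x ^ 2.
Proof. unfold cosh, sinh. rewrite <- (exp_opp_mul x). field. Qed.

Lemma sinh_pos x : 0 < x -> 0 < sinh x.
Proof. intro h. rewrite <- sinh_0. now apply sinh_lt. Qed.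

Lemma sum_f_R0_ge_term f n k : (forall i, 0 <= f i) -> (k <= n)%nat -> f k <= sum_f_R0 f n.
Proof.
  intros hf hk. induction n as [|n IH].
  - inversion hk; simpl; lra.
  - simpl. destruct (Nat.eq_dec k (S n)) as [->|e].
    + pose proof (cond_pos_sum f n hf). lra.
    + pose proof (hf (S n)). pose proof (IH ltac:(lia)). lra.
Qed.

Lemma sum_f_R0_nonneg_upto f n : (forall j, (j <= n)%nat -> 0 <= f j) -> 0 <= sum_f_R0 f n.
Proof.
  intro h. rewrite <- (Rmult_0_l (INR (S n))), <- sum_cte. now apply sum_Rle.
Qed.

Lemma sinh_ge_pow5 x : 0 <= x -> x ^ 5 / 240 <= sinh x.
Proof.
  intro hx. pose proof (exp_ge_taylor x 5 hx) as ht. rewrite tech5 in ht.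
  assert (h0 : 1 <= sum_f_R0 (fun k => x ^ k / INR (fact k)) 4).
  { replace 1 with (x ^ 0 / INR (fact 0)) by (simpl; field).
    apply (sum_f_R0_ge_term (fun k => x ^ k / INR (fact k))); [|lia].
    intro i; apply Rcomplements.Rdiv_le_0_compat; [apply pow_le; lra|apply INR_fact_lt_0]. }
  assert (exp (- x) <= 1) by (rewrite <- exp_0; apply exp_le_compat; lra).
  replace (INR (fact 5)) with 120 in ht by (simpl; ring).
  unfold sinh. lra.
Qed.

Lemma sqrt_le_of_le_sq x y : 0 <= y -> x <= y ^ 2 -> sqrt x <= y.
Proof.
  intros hy h. destruct (Rle_lt_dec x 0) as [h0|h0]; [rewrite sqrt_neg_0; auto|].
  rewrite <- (sqrt_pow2 y hy). apply sqrt_le_1; lra.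
Qed.

Lemma sqrt_half_mul t s : 0 <= t -> 0 < s -> sqrt (t * s ^ 2 / 2) = sqrt (t / 2) * s.
Proof.
  intros ht hs. replace (t * s ^ 2 / 2) with (t / 2 * Rsqr s) by (unfold Rsqr; field).
  rewrite sqrt_mult, sqrt_Rsqr; lra || apply Rle_0_sqr.
Qed.

Lemma gaussian_decay c d : 0 < d ->
  forall eps, 0 < eps -> exists M, forall x, M <= x -> Rabs (c * exp (- d * x ^ 2)) < eps.
Proof.
  intros hd eps heps. exists (Rmax 1 (Rabs c / (eps * d))). intros x hx.
  pose proof (Rmax_l 1 (Rabs c / (eps * d))). pose proof (Rmax_r 1 (Rabs c / (eps * d))).
  assert (hex : Rabs c / eps < exp (d * x ^ 2)).
  { pose proof (exp_ineq1_le (d * x ^ 2)).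
    assert (hc : Rabs c / (eps * d) * d <= x * d) by (apply Rmult_le_compat_r; lra).
    replace (Rabs c / (eps * d) * d) with (Rabs c / eps) in hc by (field; lra).
    assert (0 <= d * x * (x - 1)) by (repeat apply Rmult_le_pos; lra).
    nra. }
  replace (exp (- d * x ^ 2)) with (/ exp (d * x ^ 2)) by (rewrite <- exp_Ropp; f_equal; ring).
  pose proof (exp_pos (d * x ^ 2)).
  rewrite Rabs_mult, (Rabs_right (/ _)) by (apply Rle_ge; left; now apply Rinv_0_lt_compat).
  apply (Rmult_lt_reg_r (exp (d * x ^ 2))); auto.
  replace (Rabs c * / exp (d * x ^ 2) * exp (d * x ^ 2)) with (Rabs c) by (field; lra).
  apply (Rmult_lt_compat_l eps) in hex; auto.
  replace (eps * (Rabs c / eps)) with (Rabs c) in hex by (field; lra). lra.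
Qed.

Lemma is_lim_seq_ge_terms (s : nat -> R) (c l : R) :
  is_lim_seq s l -> (forall n, c <= s n) -> c <= l.
Proof. intros hl h. apply (is_lim_seq_le (fun _ => c) s c l h (is_lim_seq_const c) hl). Qed.

Lemma ex_series_inv_consecutive : ex_series (fun n => / (INR (S n) * INR (S (S n)))).
Proof.
  apply ex_series_Reals_1. exists 1.
  assert (E : forall N, sum_f_R0 (fun n => / (INR (S n) * INR (S (S n)))) N = 1 - / INR (S (S N))).
  { induction N as [|N IH]; [simpl; field|].
    rewrite tech5, IH, !S_INR. pose proof (pos_INR N). field. lra. }
  apply is_lim_seq_Reals.
  assert (h : is_lim_seq (fun n => / INR n) 0).
  { replace (Finite 0) with (Rbar_inv p_infty) by reflexivity.
    apply is_lim_seq_inv; [apply is_lim_seq_INR|discriminate]. }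
  apply (proj1 (is_lim_seq_incr_n _ 2 _)) in h.
  pose proof (is_lim_seq_minus' (fun _ => 1) _ 1 0 (is_lim_seq_const 1) h) as hl.
  rewrite Rminus_0_r in hl. eapply is_lim_seq_ext; [|exact hl].
  intro n. rewrite E. replace (n + 2)%nat with (S (S n)) by lia. reflexivity.
Qed.

Lemma Rseries_Series (f : nat -> R) : ex_series f -> Rseries f = Series f.
Proof.
  intro h. unfold Rseries.
  assert (he : infinite_sum f (epsilon (inhabits 0) (fun l => infinite_sum f l))).
  { apply epsilon_spec. exists (Series f). apply is_series_Reals, Series_correct, h. }
  apply is_series_Reals, is_series_unique in he. now symmetry.
Qed.

Lemma Series_nonneg (a : nat -> R) : (forall n, 0 <= a n) -> ex_series a -> 0 <= Series a.
Proof.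
  intros h ha. replace 0 with (Series (fun n => 0 * a n)) by (rewrite Series_scal_l; ring).
  apply Series_le; auto. intro n; specialize (h n); lra.
Qed.

Lemma Series_mono (a b : nat -> R) : ex_series a -> ex_series b -> (forall n, a n <= b n) ->
  Series a <= Series b.
Proof.
  intros ha hb h.
  assert (hd : 0 <= Series (fun n => b n - a n)).
  { apply Series_nonneg; [intro n; specialize (h n); lra|apply (ex_series_minus b a); auto]. }
  rewrite Series_minus in hd; auto. lra.
Qed.

Lemma Series_ge_first (a : nat -> R) : (forall n, 0 <= a n) -> ex_series a -> a 0%nat <= Series a.
Proof.
  intros h ha. rewrite Series_incr_1; auto.
  pose proof (Series_nonneg (fun k => a (S k)) (fun k => h (S k)) (proj1 (ex_series_incr_1 a) ha)).
  lra.
Qed.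

Lemma ex_series_Rabs_le (a b : nat -> R) : (forall n, Rabs (a n) <= b n) -> ex_series b ->
  ex_series a.
Proof. intros h hb. apply (ex_series_le a b); auto. Qed.

Lemma Series_abs_le (a b : nat -> R) : (forall n, Rabs (a n) <= b n) -> ex_series b ->
  Rabs (Series a) <= Series b.
Proof.
  intros h hb.
  assert (habs : ex_series (fun n => Rabs (a n))).
  { apply (ex_series_Rabs_le _ b); auto. intro n. rewrite Rabs_Rabsolu. apply h. }
  eapply Rle_trans; [apply Series_Rabs, habs|].
  apply Series_le; auto. intro n; split; [apply Rabs_pos|apply h].
Qed.

(** * The power series of cosh - cos *)

Definition hc_minus (x : R) : R := cosh x - cos x.

Definition hs_plus (x : R) : R := sinh x + sin x.

Definition hc_plus (x : R) : R := cosh x + cos x.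

Definition hs_minus (x : R) : R := sinh x - sin x.

Fixpoint hderiv (n : nat) : R -> R :=
  match n with
  | O => hc_minus | 1%nat => hs_plus | 2%nat => hc_plus | 3%nat => hs_minus
  | S (S (S (S k))) => hderiv k
  end.

Lemma hderiv_cases n :
  (hderiv n = hc_minus /\ hderiv (S n) = hs_plus) \/
  (hderiv n = hs_plus /\ hderiv (S n) = hc_plus) \/
  (hderiv n = hc_plus /\ hderiv (S n) = hs_minus) \/
  (hderiv n = hs_minus /\ hderiv (S n) = hc_minus).
Proof.
  induction n as [n IH] using (well_founded_induction Wf_nat.lt_wf).
  destruct n as [|[|[|[|n]]]]; simpl; try tauto.
  apply IH; lia.
Qed.

Lemma is_derive_hderiv n x : is_derive (hderiv n) x (hderiv (S n) x).
Proof.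
  destruct (hderiv_cases n) as [[-> ->]|[[-> ->]|[[-> ->]|[-> ->]]]];
    unfold hc_minus, hs_plus, hc_plus, hs_minus, cosh, sinh;
    auto_derive; auto; field.
Qed.

Lemma Derive_n_hderiv j n x : Derive_n (hderiv j) n x = hderiv (n + j) x.
Proof.
  revert x; induction n as [|n IH]; intro x; [reflexivity|].
  simpl. rewrite (Derive_ext _ (hderiv (n + j)) x IH).
  apply is_derive_unique, is_derive_hderiv.
Qed.

Lemma hderiv_bound n x : 0 <= x -> Rabs (hderiv n x) <= 2 * exp x.
Proof.
  intro hx.
  assert (1 <= exp x) by (rewrite <- exp_0; apply exp_le_compat; lra).
  assert (0 < exp (- x) <= 1) by (split; [apply exp_pos|rewrite <- exp_0; apply exp_le_compat; lra]).
  pose proof (COS_bound x); pose proof (SIN_bound x).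
  destruct (hderiv_cases n) as [[-> _]|[[-> _]|[[-> _]|[-> _]]]];
    unfold hc_minus, hs_plus, hc_plus, hs_minus, cosh, sinh; apply Rabs_le; lra.
Qed.

Lemma hderiv_0 n : hderiv n 0 = 0 \/ hderiv n 0 = 2.
Proof.
  destruct (hderiv_cases n) as [[-> _]|[[-> _]|[[-> _]|[-> _]]]];
    unfold hc_minus, hs_plus, hc_plus, hs_minus; rewrite ?cosh_0, ?sinh_0, ?cos_0, ?sin_0; lra.
Qed.

Definition taylor_hderiv (j n : nat) (u : R) : R :=
  sum_f_R0 (fun m => u ^ m / INR (fact m) * hderiv (m + j) 0) n.

(* Lagrange remainder, with every derivative bounded by [2 e^u] on [0, u]. *)
Lemma taylor_hderiv_error j u n : 0 < u ->
  Rabs (hderiv j u - taylor_hderiv j n u) <= 2 * exp u * (u ^ S n / INR (fact (S n))).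
Proof.
  intro hu.
  destruct (Taylor_Lagrange (hderiv j) n 0 u hu) as [z [hz E]].
  { intros t _ k _; destruct k as [|k]; simpl; [exact I|].
    apply (ex_derive_ext (hderiv (k + j))); [intro; symmetry; apply Derive_n_hderiv|].
    eexists; apply is_derive_hderiv. }
  rewrite E, Rminus_0_r, Derive_n_hderiv.
  rewrite (sum_eq _ (fun m => u ^ m / INR (fact m) * hderiv (m + j) 0))
    by (intros; rewrite Derive_n_hderiv; reflexivity).
  unfold taylor_hderiv.
  match goal with |- Rabs (?s + ?t - ?s) <= _ => replace (s + t - s) with t by ring end.
  rewrite Rabs_mult, Rmult_comm, (Rabs_right (_ / _)).
  2:{ apply Rle_ge, Rcomplements.Rdiv_le_0_compat; [apply pow_le; lra|apply INR_fact_lt_0]. }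
  apply Rmult_le_compat_r.
  { apply Rcomplements.Rdiv_le_0_compat; [apply pow_le; lra|apply INR_fact_lt_0]. }
  apply Rle_trans with (2 * exp z); [apply hderiv_bound; lra|].
  apply Rmult_le_compat_l, exp_le_compat; lra.
Qed.

Lemma taylor_hderiv_lim j u : 0 < u -> is_lim_seq (fun n => taylor_hderiv j n u) (hderiv j u).
Proof.
  intro hu. apply is_lim_seq_Reals. intros eps heps.
  assert (hE : 0 < 2 * exp u) by (pose proof (exp_pos u); lra).
  destruct (cv_speed_pow_fact u (eps / (2 * exp u))) as [N HN].
  { apply Rdiv_lt_0_compat; auto. }
  exists N. intros n hn. unfold R_dist. rewrite Rabs_minus_sym.
  eapply Rle_lt_trans; [apply taylor_hderiv_error; auto|].
  specialize (HN (S n) ltac:(lia)). unfold R_dist in HN. rewrite Rminus_0_r in HN.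
  apply Rle_lt_trans with (2 * exp u * Rabs (u ^ S n / INR (fact (S n)))).
  { apply Rmult_le_compat_l; [lra|apply RRle_abs]. }
  apply Rmult_lt_compat_l with (r := 2 * exp u) in HN; auto.
  replace (2 * exp u * (eps / (2 * exp u))) with eps in HN by (field; lra). exact HN.
Qed.

Definition hcoef (m : nat) : R := hderiv m 0 / INR (fact m).

Lemma hcoef_nonneg m : 0 <= hcoef m.
Proof.
  unfold hcoef. pose proof (INR_fact_lt_0 m).
  destruct (hderiv_0 m) as [-> | ->]; apply Rcomplements.Rdiv_le_0_compat; lra.
Qed.

Definition psum (a : nat -> R) (n : nat) (x : R) : R := sum_f_R0 (fun m => a m * x ^ m) n.

Definition psum_d (a : nat -> R) (n : nat) (x : R) : R := sum_f_R0 (fun m => INR m * a m * x ^ m) n.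

Lemma psum_hcoef n u : psum hcoef n u = taylor_hderiv 0 n u.
Proof.
  apply sum_eq. intros i _. unfold hcoef. rewrite Nat.add_0_r. field. apply INR_fact_neq_0.
Qed.

Lemma psum_d_hcoef n u : psum_d hcoef (S n) u = u * taylor_hderiv 1 n u.
Proof.
  unfold psum_d, taylor_hderiv, hcoef. induction n as [|n IH]; [simpl; field|].
  rewrite tech5, IH, tech5, Nat.add_1_r.
  change (fact (S (S n))) with (S (S n) * fact (S n))%nat. rewrite mult_INR. simpl pow.
  field. split; [apply INR_fact_neq_0|apply not_0_INR; lia].
Qed.

Lemma psum_hcoef_lim u : 0 < u -> is_lim_seq (fun n => psum hcoef n u) (hc_minus u).
Proof.
  intro hu. eapply is_lim_seq_ext; [intro n; symmetry; apply psum_hcoef|].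
  apply (taylor_hderiv_lim 0 u hu).
Qed.

Lemma psum_d_hcoef_lim u : 0 < u -> is_lim_seq (fun n => psum_d hcoef (S n) u) (u * hs_plus u).
Proof.
  intro hu. eapply is_lim_seq_ext; [intro n; symmetry; apply psum_d_hcoef|].
  apply (is_lim_seq_scal_l _ u (hs_plus u)), (taylor_hderiv_lim 1 u hu).
Qed.

Lemma hc_minus_ge_sq u : 0 < u -> u ^ 2 <= hc_minus u.
Proof.
  intro hu.
  apply (is_lim_seq_ge_terms (fun n => psum hcoef (S (S n)) u)).
  { apply (is_lim_seq_incr_1 (fun n => psum hcoef (S n) u)).
    apply (is_lim_seq_incr_1 (fun n => psum hcoef n u)). now apply psum_hcoef_lim. }
  intro n.
  replace (u ^ 2) with (hcoef 2 * u ^ 2)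
    by (unfold hcoef; simpl; unfold hc_plus; rewrite cosh_0, cos_0; field).
  apply (sum_f_R0_ge_term (fun m => hcoef m * u ^ m)); [|lia].
  intro i; apply Rmult_le_pos; [apply hcoef_nonneg|apply pow_le; lra].
Qed.

Lemma psum_cross_nonneg a N n u v : (forall i, 0 <= a i) -> (n < N)%nat -> 0 <= u <= v ->
  0 <= INR N * v ^ N * psum a n u + u ^ N * psum_d a n v
       - INR N * u ^ N * psum a n v - v ^ N * psum_d a n u.
Proof.
  intros ha hn huv.
  replace (INR N * v ^ N * psum a n u + u ^ N * psum_d a n v
           - INR N * u ^ N * psum a n v - v ^ N * psum_d a n u)
    with (sum_f_R0 (fun j => a j * (INR N - INR j) * (v ^ N * u ^ j - u ^ N * v ^ j)) n).
  2:{ unfold psum, psum_d. clear hn.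
      induction n as [|n IH]; simpl; [ring|rewrite IH; ring]. }
  apply sum_f_R0_nonneg_upto. intros j hj.
  assert (INR j <= INR N) by (apply le_INR; lia).
  assert (hN : N = (j + (N - j))%nat) by lia.
  rewrite hN at 2 3. rewrite !pow_add.
  replace (v ^ j * v ^ (N - j) * u ^ j - u ^ j * u ^ (N - j) * v ^ j)
    with (u ^ j * v ^ j * (v ^ (N - j) - u ^ (N - j))) by ring.
  pose proof (pow_incr u v (N - j) huv). pose proof (pow_le u j (proj1 huv)).
  pose proof (pow_le v j ltac:(lra)). pose proof (ha j).
  apply Rmult_le_pos; [apply Rmult_le_pos; lra|].
  apply Rmult_le_pos; [apply Rmult_le_pos|]; lra.
Qed.

(* Chebyshev's sum inequality: [x psum'/psum] is nondecreasing for nonnegative coefficients. *)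
Lemma psum_d_ratio_mono a n u v : (forall i, 0 <= a i) -> 0 <= u <= v ->
  psum_d a n u * psum a n v <= psum_d a n v * psum a n u.
Proof.
  intros ha huv. induction n as [|n IH]; [unfold psum, psum_d; simpl; lra|].
  pose proof (psum_cross_nonneg a (S n) n u v ha (le_n _) huv).
  pose proof (ha (S n)).
  assert (psum_d a (S n) v * psum a (S n) u - psum_d a (S n) u * psum a (S n) v
     = (psum_d a n v * psum a n u - psum_d a n u * psum a n v)
       + a (S n) * (INR (S n) * v ^ S n * psum a n u + u ^ S n * psum_d a n v
                    - INR (S n) * u ^ S n * psum a n v - v ^ S n * psum_d a n u))
    by (unfold psum, psum_d; rewrite !tech5; ring).
  nra.
Qed.

(* [u P'(u) - 2 P(u) = sum_n (n - 2) c_n u^n], and the [n = 6] term is positive. *)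
Lemma hc_minus_lt_hs_plus u : 0 < u -> 2 * hc_minus u < u * hs_plus u.
Proof.
  intro hu.
  assert (hlim : is_lim_seq (fun n => psum_d hcoef (S (n + 5)) u - 2 * psum hcoef (S (n + 5)) u)
                   (u * hs_plus u - 2 * hc_minus u)).
  { apply (is_lim_seq_incr_n (fun n => psum_d hcoef (S n) u - 2 * psum hcoef (S n) u) 5).
    apply is_lim_seq_minus'; [now apply psum_d_hcoef_lim|].
    apply (is_lim_seq_scal_l _ 2 (hc_minus u)), (is_lim_seq_incr_1 (fun n => psum hcoef n u)).
    now apply psum_hcoef_lim. }
  assert (h6 : 0 < (INR 6 - 2) * hcoef 6 * u ^ 6).
  { unfold hcoef; simpl hderiv; unfold hc_plus; rewrite cosh_0, cos_0.
    pose proof (INR_fact_lt_0 6). pose proof (pow_lt u 6 hu). simpl INR.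
    apply Rmult_lt_0_compat; [apply Rmult_lt_0_compat|]; [lra|apply Rdiv_lt_0_compat|]; lra. }
  enough ((INR 6 - 2) * hcoef 6 * u ^ 6 <= u * hs_plus u - 2 * hc_minus u) by lra.
  apply (is_lim_seq_ge_terms _ _ _ hlim); intro n.
  replace (psum_d hcoef (S (n + 5)) u - 2 * psum hcoef (S (n + 5)) u)
    with (sum_f_R0 (fun m => (INR m - 2) * hcoef m * u ^ m) (S (n + 5))).
  2:{ unfold psum, psum_d. generalize (S (n + 5)); intro N.
      induction N as [|N IH]; simpl; [ring|rewrite IH; ring]. }
  apply (sum_f_R0_ge_term (fun m => (INR m - 2) * hcoef m * u ^ m)); [|lia].
  intro i. apply Rmult_le_pos; [|apply pow_le; lra].
  destruct i as [|[|i]].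
  - unfold hcoef; simpl; unfold hc_minus; rewrite cosh_0, cos_0; lra.
  - unfold hcoef; simpl; unfold hs_plus; rewrite sinh_0, sin_0; lra.
  - apply Rmult_le_pos; [|apply hcoef_nonneg].
    rewrite !S_INR. pose proof (pos_INR i). lra.
Qed.

Lemma hs_plus_ratio_mono u v : 0 < u <= v ->
  u * hs_plus u * hc_minus v <= v * hs_plus v * hc_minus u.
Proof.
  intro huv.
  assert (lim : forall x y, 0 < x -> 0 < y ->
    is_lim_seq (fun n => psum_d hcoef (S n) x * psum hcoef (S n) y) (x * hs_plus x * hc_minus y)).
  { intros x y hx hy. apply is_lim_seq_mult'; [now apply psum_d_hcoef_lim|].
    apply (is_lim_seq_incr_1 (fun n => psum hcoef n y)). now apply psum_hcoef_lim. }
  exact (is_lim_seq_le _ _ _ _ (fun n => psum_d_ratio_mono hcoef (S n) u v hcoef_nonneg ltac:(lra))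
           (lim u v ltac:(lra) ltac:(lra)) (lim v u ltac:(lra) ltac:(lra))).
Qed.

Lemma sinh_cosh_add_sin_cos x : sinh x * cosh x + sin x * cos x = hs_plus (2 * x) / 2.
Proof.
  unfold hs_plus, sinh, cosh. destruct (exp_double x) as [-> ->]. rewrite sin_2a. field.
Qed.

Lemma sinh_sq_add_sin_sq x : sinh x ^ 2 + sin x ^ 2 = hc_minus (2 * x) / 2.
Proof.
  unfold hc_minus, sinh, cosh. destruct (exp_double x) as [-> ->]. rewrite cos_2a_sin.
  rewrite <- (exp_opp_mul x). field.
Qed.

Lemma sinh_sq_add_sin_sq_ge x : 0 < x -> 2 * x ^ 2 <= sinh x ^ 2 + sin x ^ 2.
Proof.
  intro hx. rewrite sinh_sq_add_sin_sq. pose proof (hc_minus_ge_sq (2 * x) ltac:(lra)). nra.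
Qed.

(* [Re ((1+j) x coth ((1+j) x))] for real [x]. *)
Definition re_xcoth (x : R) : R :=
  x * (sinh x * cosh x + sin x * cos x) / (sinh x ^ 2 + sin x ^ 2).

Lemma re_xcoth_eq x : 0 < x -> re_xcoth x = (2 * x) * hs_plus (2 * x) / (2 * hc_minus (2 * x)).
Proof.
  intro hx. unfold re_xcoth. rewrite sinh_cosh_add_sin_cos, sinh_sq_add_sin_sq.
  pose proof (hc_minus_ge_sq (2 * x) ltac:(lra)). field. nra.
Qed.

Lemma re_xcoth_gt_1 x : 0 < x -> 1 < re_xcoth x.
Proof.
  intro hx. rewrite re_xcoth_eq by lra.
  pose proof (hc_minus_ge_sq (2 * x) ltac:(lra)). pose proof (hc_minus_lt_hs_plus (2 * x) ltac:(lra)).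
  apply Rlt_div_r; nra.
Qed.

Lemma re_xcoth_mono x y : 0 < x <= y -> re_xcoth x <= re_xcoth y.
Proof.
  intro h. rewrite !re_xcoth_eq by lra.
  pose proof (hc_minus_ge_sq (2 * x) ltac:(lra)). pose proof (hc_minus_ge_sq (2 * y) ltac:(lra)).
  pose proof (hs_plus_ratio_mono (2 * x) (2 * y) ltac:(lra)).
  assert (0 < hc_minus (2 * x)) by nra. assert (0 < hc_minus (2 * y)) by nra.
  apply Rmult_le_reg_r with (2 * hc_minus (2 * x) * (2 * hc_minus (2 * y))); [nra|].
  unfold Rdiv. field_simplify; nra.
Qed.

Definition Cnorm2 (z : Cx) : R := fst z * fst z + snd z * snd z.

Definition Cnorm (z : Cx) : R := sqrt (Cnorm2 z).

Lemma Cnorm2_nonneg z : 0 <= Cnorm2 z.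
Proof. unfold Cnorm2; nra. Qed.

Lemma Cnorm_nonneg z : 0 <= Cnorm z.
Proof. apply sqrt_pos. Qed.

Lemma Cnorm_sq z : Cnorm z * Cnorm z = Cnorm2 z.
Proof. apply sqrt_sqrt, Cnorm2_nonneg. Qed.

Lemma Cnorm2_mul z w : Cnorm2 (Cmul z w) = Cnorm2 z * Cnorm2 w.
Proof. unfold Cnorm2, Cmul; simpl; ring. Qed.

Lemma Cnorm2_inv z : 0 < Cnorm2 z -> Cnorm2 (Cinv z) = / Cnorm2 z.
Proof. unfold Cnorm2, Cinv; simpl; intro h. field. lra. Qed.

Lemma Cnorm_mul z w : Cnorm (Cmul z w) = Cnorm z * Cnorm w.
Proof. unfold Cnorm; rewrite Cnorm2_mul; apply sqrt_mult; apply Cnorm2_nonneg. Qed.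

Lemma Cnorm_scal a z : Cnorm (Cscal a z) = Rabs a * Cnorm z.
Proof.
  unfold Cnorm. replace (Cnorm2 (Cscal a z)) with (Rsqr a * Cnorm2 z)
    by (unfold Cnorm2, Cscal, Rsqr; simpl; ring).
  rewrite sqrt_mult, sqrt_Rsqr_abs; [reflexivity|apply Rle_0_sqr|apply Cnorm2_nonneg].
Qed.

Lemma Cnorm_exp z : Cnorm (Cexp z) = exp (fst z).
Proof.
  unfold Cnorm, Cnorm2, Cexp; simpl.
  replace (exp (fst z) * cos (snd z) * (exp (fst z) * cos (snd z)) +
           exp (fst z) * sin (snd z) * (exp (fst z) * sin (snd z))) with (Rsqr (exp (fst z))).
  - apply sqrt_Rsqr; left; apply exp_pos.
  - pose proof (sin2_cos2 (snd z)) as h. unfold Rsqr in *. nra.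
Qed.

Lemma Cnorm_pow z n : Cnorm (Cpow z n) = Cnorm z ^ n.
Proof.
  induction n as [|n IH]; simpl.
  - unfold Cnorm, Cnorm2; simpl. replace (1 * 1 + 0 * 0) with 1 by ring. apply sqrt_1.
  - rewrite Cnorm_mul, IH; reflexivity.
Qed.

Lemma Rabs_fst_le_Cnorm z : Rabs (fst z) <= Cnorm z.
Proof.
  unfold Cnorm, Cnorm2. rewrite <- sqrt_Rsqr_abs. apply sqrt_le_1; [apply Rle_0_sqr|nra|].
  unfold Rsqr; nra.
Qed.

Lemma Rabs_snd_le_Cnorm z : Rabs (snd z) <= Cnorm z.
Proof.
  unfold Cnorm, Cnorm2. rewrite <- sqrt_Rsqr_abs. apply sqrt_le_1; [apply Rle_0_sqr|nra|].
  unfold Rsqr; nra.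
Qed.

Lemma Cdot_le_Cnorm z w : fst z * fst w + snd z * snd w <= Cnorm z * Cnorm w.
Proof.
  pose proof (Cnorm_sq z) as hz. pose proof (Cnorm_sq w) as hw.
  pose proof (Rmult_le_pos _ _ (Cnorm_nonneg z) (Cnorm_nonneg w)).
  unfold Cnorm2 in hz, hw.
  destruct (Rle_dec (fst z * fst w + snd z * snd w) 0) as [h|h]; [lra|].
  assert ((fst z * fst w + snd z * snd w) ^ 2 <= (Cnorm z * Cnorm w) ^ 2).
  { replace ((Cnorm z * Cnorm w) ^ 2) with ((Cnorm z * Cnorm z) * (Cnorm w * Cnorm w)) by ring.
    rewrite hz, hw. pose proof (pow2_ge_0 (fst z * snd w - snd z * fst w)). nra. }
  nra.
Qed.

Lemma Cpow_real y n : Cpow (y, 0) n = (y ^ n, 0).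
Proof.
  induction n as [|n IH]; simpl; [reflexivity|].
  rewrite IH. unfold Cmul; simpl. f_equal; ring.
Qed.

(** * Modified Bessel functions *)

Definition expc (p : R) (k : nat) : R := p ^ k / INR (fact k).

Lemma expc_nonneg p k : 0 <= p -> 0 <= expc p k.
Proof. intro h. apply Rcomplements.Rdiv_le_0_compat; [apply pow_le; auto|apply INR_fact_lt_0]. Qed.

Lemma expc_0 p : expc p 0 = 1.
Proof. unfold expc; simpl; field. Qed.

Lemma expc_mono p q k : 0 <= p <= q -> expc p k <= expc q k.
Proof.
  intro h. apply Rmult_le_compat_r; [left; apply Rinv_0_lt_compat, INR_fact_lt_0|].
  apply pow_incr; auto.
Qed.

Lemma is_series_expc p : is_series (expc p) (exp p).
Proof.
  apply is_series_Reals. unfold exp. destruct (exist_exp p) as [l hl]; simpl.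
  intros eps he. destruct (hl eps he) as [N HN]. exists N. intros n hn.
  unfold expc. rewrite (sum_eq _ (fun i => / INR (fact i) * p ^ i)); [now apply HN|].
  intros; unfold Rdiv; ring.
Qed.

Lemma ex_series_expc p : ex_series (expc p).
Proof. eexists; apply is_series_expc. Qed.

Lemma expc_le_exp p k : 0 <= p -> expc p k <= exp p.
Proof.
  intro hp. eapply Rle_trans; [|apply (exp_ge_taylor p k hp)].
  apply (sum_f_R0_ge_term (fun k => p ^ k / INR (fact k))); [|lia].
  intro i; apply (expc_nonneg p i hp).
Qed.

(* [Iser m p = I_m (2 p)], the Bessel series with nonnegative terms. *)
Definition Iser (m : nat) (p : R) : R := Series (fun k => expc p k * expc p (k + m)).

Lemma ex_Iser m p : 0 <= p -> ex_series (fun k => expc p k * expc p (k + m)).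
Proof.
  intro hp. apply (ex_series_Rabs_le _ (fun k => exp p * expc p k)).
  - intro n. pose proof (expc_le_exp p (n + m) hp). pose proof (expc_nonneg p n hp).
    pose proof (expc_nonneg p (n + m) hp). rewrite Rabs_right by nra. nra.
  - apply (ex_series_scal_l (exp p) _ (ex_series_expc p)).
Qed.

Lemma Iser0_le_exp p : 0 <= p -> Iser 0 p <= exp (2 * p).
Proof.
  intro hp. unfold Iser.
  replace (exp (2 * p)) with (Series (fun k => exp p * expc p k)).
  2:{ rewrite Series_scal_l, (is_series_unique _ _ (is_series_expc p)), <- exp_plus. f_equal; ring. }
  apply Series_le; [|apply (ex_series_scal_l (exp p) _ (ex_series_expc p))].
  intro n. rewrite Nat.add_0_r.
  pose proof (expc_le_exp p n hp). pose proof (expc_nonneg p n hp). split; nra.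
Qed.

Lemma Iser0_ge_1 p : 0 <= p -> 1 <= Iser 0 p.
Proof.
  intro hp. unfold Iser.
  replace 1 with (expc p 0 * expc p (0 + 0)) by (rewrite Nat.add_0_r, expc_0; ring).
  apply (Series_ge_first (fun k => expc p k * expc p (k + 0))); [|now apply ex_Iser].
  intro; apply Rmult_le_pos; apply expc_nonneg; auto.
Qed.

Lemma Iser_mono m p q : 0 <= p <= q -> Iser m p <= Iser m q.
Proof.
  intro h. apply Series_le; [|apply ex_Iser; lra]. intro n.
  pose proof (expc_mono p q n h). pose proof (expc_mono p q (n + m) h).
  pose proof (expc_nonneg p n ltac:(lra)). pose proof (expc_nonneg p (n + m) ltac:(lra)).
  split; nra.
Qed.

(* [2 c_k c_(k+m) <= c_k^2 + c_(k+m)^2], and the shifted sum of squares misses [c_0^2 = 1]. *)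
Lemma Iser_le_Iser0 m p : 0 <= p -> (1 <= m)%nat -> Iser m p <= Iser 0 p - / 2.
Proof.
  intros hp hm. unfold Iser.
  set (sq := fun k => expc p k * expc p (k + 0)).
  assert (ex_sq : ex_series sq) by (apply ex_Iser; auto).
  assert (ex_shift : ex_series (fun k => sq (m + k)%nat)) by (apply ex_series_incr_n; auto).
  assert (E : Series sq = sum_f_R0 sq (pred m) + Series (fun k => sq (m + k)%nat))
    by (apply Series_incr_n; auto; lia).
  assert (h1 : 1 <= sum_f_R0 sq (pred m)).
  { replace 1 with (sq 0%nat) by (unfold sq; rewrite Nat.add_0_r, expc_0; ring).
    apply sum_f_R0_ge_term; [|lia]. intro; unfold sq; rewrite Nat.add_0_r; apply Rle_0_sqr. }
  assert (h2 : 2 * Series (fun k => expc p k * expc p (k + m))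
               <= Series sq + Series (fun k => sq (m + k)%nat)).
  { rewrite <- Series_plus, <- Series_scal_l by auto.
    apply Series_mono; [apply (ex_series_scal_l 2 _ (ex_Iser m p hp))|apply (ex_series_plus _ _ ex_sq ex_shift)|].
    intro n. unfold sq. rewrite !Nat.add_0_r, (Nat.add_comm m n).
    pose proof (pow2_ge_0 (expc p n - expc p (n + m))). nra. }
  lra.
Qed.

Definition besselI_term (m : nat) (z : Cx) (k : nat) : Cx :=
  Cscal (/ (INR (fact k) * INR (fact (k + m)))) (Cpow (Cscal (/ 2) z) (2 * k + m)).

Lemma Cnorm_besselI_term m z k :
  Cnorm (besselI_term m z k) = expc (Cnorm z / 2) k * expc (Cnorm z / 2) (k + m).
Proof.
  unfold besselI_term. rewrite Cnorm_scal, Cnorm_pow, Cnorm_scal.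
  pose proof (INR_fact_lt_0 k). pose proof (INR_fact_lt_0 (k + m)).
  rewrite Rabs_right by (apply Rle_ge; left; apply Rinv_0_lt_compat; nra).
  rewrite (Rabs_right (/ 2)) by lra.
  replace (2 * k + m)%nat with (k + (k + m))%nat by lia. rewrite pow_add.
  unfold expc. replace (/ 2 * Cnorm z) with (Cnorm z / 2) by field. field. lra.
Qed.

(* [|S|^2 = sum_k <S, T_k> <= |S| sum_k |T_k|] for the sum [S] of the series. *)
Lemma Cnorm_BesselI_le m z : Cnorm (BesselI m z) <= Iser m (Cnorm z / 2).
Proof.
  assert (hp : 0 <= Cnorm z / 2) by (pose proof (Cnorm_nonneg z); lra).
  set (T := besselI_term m z).
  assert (hT : forall k, Rabs (fst (T k)) <= expc (Cnorm z / 2) k * expc (Cnorm z / 2) (k + m)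
                      /\ Rabs (snd (T k)) <= expc (Cnorm z / 2) k * expc (Cnorm z / 2) (k + m)).
  { intro k. unfold T. rewrite <- Cnorm_besselI_term.
    split; [apply Rabs_fst_le_Cnorm|apply Rabs_snd_le_Cnorm]. }
  assert (ex1 : ex_series (fun k => fst (T k)))
    by (apply (ex_series_Rabs_le _ _ (fun k => proj1 (hT k))), ex_Iser, hp).
  assert (ex2 : ex_series (fun k => snd (T k)))
    by (apply (ex_series_Rabs_le _ _ (fun k => proj2 (hT k))), ex_Iser, hp).
  replace (BesselI m z) with (Series (fun k => fst (T k)), Series (fun k => snd (T k)))
    by (unfold BesselI, Cseries; rewrite !Rseries_Series; auto).
  set (S := (Series (fun k => fst (T k)), Series (fun k => snd (T k)))).
  assert (key : Cnorm S * Cnorm S <= Cnorm S * Iser m (Cnorm z / 2)).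
  { rewrite Cnorm_sq. unfold Cnorm2, Iser.
    replace (fst S * fst S + snd S * snd S)
      with (Series (fun k => fst S * fst (T k) + snd S * snd (T k))).
    2:{ rewrite Series_plus, !Series_scal_l; [reflexivity| |];
        [apply (ex_series_scal_l _ _ ex1)|apply (ex_series_scal_l _ _ ex2)]. }
    rewrite <- Series_scal_l. apply Series_mono.
    - apply (ex_series_plus (fun k => fst S * fst (T k)) (fun k => snd S * snd (T k)));
        [apply (ex_series_scal_l _ _ ex1)|apply (ex_series_scal_l _ _ ex2)].
    - apply (ex_series_scal_l _ _ (ex_Iser m _ hp)).
    - intro n. unfold T. rewrite <- Cnorm_besselI_term. apply Cdot_le_Cnorm. }
  assert (0 <= Iser m (Cnorm z / 2)).
  { apply Series_nonneg; [|now apply ex_Iser].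
    intro; apply Rmult_le_pos; apply expc_nonneg, hp. }
  pose proof (Cnorm_nonneg S). nra.
Qed.

Lemma BesselI_R_0 x : 0 <= x -> BesselI_R 0 x = Iser 0 (x / 2).
Proof.
  intro hx. unfold BesselI_R, BesselI, Cseries, Creal. simpl fst.
  unfold Iser. rewrite <- Rseries_Series by (apply ex_Iser; lra).
  f_equal. apply functional_extensionality. intro k.
  replace (Cscal (/ 2) (x, 0)) with (x / 2, 0) by (unfold Cscal; simpl; f_equal; field).
  rewrite Cpow_real. simpl fst. rewrite !Nat.add_0_r. unfold expc. rewrite pow_add.
  pose proof (INR_fact_lt_0 k). field. lra.
Qed.

Lemma Csqrt_scal_j t : 0 <= t -> Csqrt (Cscal t Cj) = (sqrt (t / 2), sqrt (t / 2)).
Proof.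
  intro ht. unfold Csqrt, Cscal, Cj; simpl.
  replace (t * 0 * (t * 0) + t * 1 * (t * 1)) with (t * t) by ring.
  rewrite sqrt_square by auto.
  destruct (Rle_dec 0 (t * 1)) as [_|h]; [|lra].
  f_equal; f_equal; field.
Qed.

Lemma Csinh_diag b : Csinh (b, b) = (sinh b * cos b, cosh b * sin b).
Proof.
  unfold Csinh, Cscal, Cadd, Cexp, Cneg; simpl. rewrite cos_neg, sin_neg.
  unfold sinh, cosh. f_equal; field.
Qed.

Lemma Ccosh_diag b : Ccosh (b, b) = (cosh b * cos b, sinh b * sin b).
Proof.
  unfold Ccosh, Cscal, Cadd, Cexp, Cneg; simpl. rewrite cos_neg, sin_neg.
  unfold sinh, cosh. f_equal; field.
Qed.

Lemma Cnorm2_Csinh_diag b : Cnorm2 (Csinh (b, b)) = sinh b ^ 2 + sin b ^ 2.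
Proof.
  rewrite Csinh_diag. unfold Cnorm2; simpl.
  pose proof (cosh_sq b). pose proof (sin2_cos2 b) as h. unfold Rsqr in h. nra.
Qed.

Lemma re_Cmul_Ccoth_diag k b : 0 < b -> fst (Cmul (k * b, k * b) (Ccoth (b, b))) = k * re_xcoth b.
Proof.
  intro hb. pose proof (sinh_sq_add_sin_sq_ge b hb).
  pose proof (Cnorm2_Csinh_diag b) as hd. unfold Cnorm2 in hd.
  unfold Ccoth, Cdiv, Cmul, Cinv. rewrite hd, Csinh_diag, Ccosh_diag; simpl.
  unfold re_xcoth.
  pose proof (cosh_sq b) as hc. pose proof (sin2_cos2 b) as h. unfold Rsqr in h.
  transitivity (k * b * (sinh b * cosh b * (sin b * sin b + cos b * cos b)
     + sin b * cos b * (cosh b ^ 2 - sinh b ^ 2)) / (sinh b ^ 2 + sin b ^ 2)).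
  { field; nra. }
  rewrite h, hc. field. nra.
Qed.

Lemma Cnorm2_Cmul_Cinv_Csinh_diag k b : 0 < b ->
  Cnorm2 (Cmul (k * b, k * b) (Cinv (Csinh (b, b)))) = 2 * k ^ 2 * b ^ 2 / (sinh b ^ 2 + sin b ^ 2).
Proof.
  intro hb. pose proof (sinh_sq_add_sin_sq_ge b hb).
  rewrite Cnorm2_mul, Cnorm2_inv, Cnorm2_Csinh_diag; [unfold Cnorm2; simpl; field; nra|].
  rewrite Cnorm2_Csinh_diag. nra.
Qed.

(** * The PZD channel *)

Section Channel.

Variables gamma sigma L : R.
Hypotheses (hg : 0 < gamma) (hs : 0 < sigma) (hL : 0 < L).

Definition kap : R := / (sigma ^ 2 * L).

Lemma kap_pos : 0 < kap.
Proof. apply Rinv_0_lt_compat, Rmult_lt_0_compat; [apply pow_lt|]; lra. Qed.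

Lemma beta_pos m : (1 <= m)%nat -> 0 < beta gamma sigma L m.
Proof.
  intro hm. apply (le_INR 1) in hm. simpl in hm.
  apply Rmult_lt_0_compat; auto. apply Rmult_lt_0_compat; auto. apply sqrt_lt_R0. nra.
Qed.

Lemma beta_le m n : (m <= n)%nat -> beta gamma sigma L m <= beta gamma sigma L n.
Proof.
  intro hmn. apply le_INR in hmn. pose proof (pos_INR m).
  unfold beta. apply Rmult_le_compat_r; [lra|]. apply Rmult_le_compat_r; [lra|].
  apply sqrt_le_1_alt. nra.
Qed.

Lemma beta_sq m : beta gamma sigma L m ^ 2 = INR m * (gamma / 2 * sigma ^ 2 * L ^ 2).
Proof.
  unfold beta. pose proof (pos_INR m).
  replace ((sqrt (INR m * gamma / 2) * sigma * L) ^ 2) with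
    ((sqrt (INR m * gamma / 2) * sqrt (INR m * gamma / 2)) * sigma ^ 2 * L ^ 2) by ring.
  rewrite sqrt_sqrt by nra. field.
Qed.

Lemma prefactor_eq m :
  Cscal (/ sigma) (Csqrt (Cscal (INR m * gamma) Cj))
  = (kap * beta gamma sigma L m, kap * beta gamma sigma L m).
Proof.
  pose proof (pos_INR m). rewrite Csqrt_scal_j by nra.
  unfold Cscal, kap, beta; simpl. f_equal; field; lra.
Qed.

Lemma coth_arg_eq m :
  Cscal L (Csqrt (Cscal (INR m * gamma * sigma ^ 2) Cj))
  = (beta gamma sigma L m, beta gamma sigma L m).
Proof.
  pose proof (pos_INR m). rewrite Csqrt_scal_j by (apply Rmult_le_pos; [nra|apply pow2_ge_0]).
  rewrite sqrt_half_mul by nra. unfold Cscal, beta; simpl. f_equal; ring.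
Qed.

Lemma a_m_eq m : a_m gamma sigma L m =
  Cmul (kap * beta gamma sigma L m, kap * beta gamma sigma L m)
       (Ccoth (beta gamma sigma L m, beta gamma sigma L m)).
Proof. unfold a_m. now rewrite prefactor_eq, coth_arg_eq. Qed.

Lemma b_m_eq m : b_m gamma sigma L m =
  Cmul (kap * beta gamma sigma L m, kap * beta gamma sigma L m)
       (Cinv (Csinh (beta gamma sigma L m, beta gamma sigma L m))).
Proof. unfold b_m. now rewrite prefactor_eq, coth_arg_eq. Qed.

Lemma re_a_m m : (1 <= m)%nat -> fst (a_m gamma sigma L m) = kap * re_xcoth (beta gamma sigma L m).
Proof. intro hm. rewrite a_m_eq. now apply re_Cmul_Ccoth_diag, beta_pos. Qed.

Lemma re_a_1_gt_kap : kap < fst (a_m gamma sigma L 1).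
Proof.
  rewrite re_a_m by lia. pose proof (re_xcoth_gt_1 _ (beta_pos 1 (le_n _))). pose proof kap_pos.
  nra.
Qed.

Lemma re_a_1_le m : (1 <= m)%nat -> fst (a_m gamma sigma L 1) <= fst (a_m gamma sigma L m).
Proof.
  intro hm. rewrite !re_a_m by lia. apply Rmult_le_compat_l; [left; apply kap_pos|].
  apply re_xcoth_mono. split; [apply beta_pos; lia|now apply beta_le].
Qed.

Lemma Cnorm2_b_m m : (1 <= m)%nat -> Cnorm2 (b_m gamma sigma L m) =
  2 * kap ^ 2 * beta gamma sigma L m ^ 2 /
    (sinh (beta gamma sigma L m) ^ 2 + sin (beta gamma sigma L m) ^ 2).
Proof. intro hm. rewrite b_m_eq. now apply Cnorm2_Cmul_Cinv_Csinh_diag, beta_pos. Qed.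

Lemma Cnorm_b_m_le_kap m : (1 <= m)%nat -> Cnorm (b_m gamma sigma L m) <= kap.
Proof.
  intro hm. unfold Cnorm. rewrite Cnorm2_b_m by auto.
  apply sqrt_le_of_le_sq; [left; apply kap_pos|].
  set (b := beta gamma sigma L m).
  pose proof (beta_pos m hm) as hpos. fold b in hpos.
  pose proof (sinh_sq_add_sin_sq_ge b hpos) as hb.
  pose proof (Rmult_le_compat_l _ _ _ (pow2_ge_0 kap) hb).
  apply Rcomplements.Rle_div_l; [pose proof (pow_lt b 2 hpos)|]; lra.
Qed.

Lemma bterm_pos n : 0 < bterm gamma sigma L n.
Proof.
  pose proof (beta_pos (S n) ltac:(lia)). apply Rdiv_lt_0_compat, sinh_pos; auto.
Qed.

Lemma Cnorm_b_m_le_bterm n : Cnorm (b_m gamma sigma L (S n)) <= sqrt 2 * kap * bterm gamma sigma L n.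
Proof.
  unfold Cnorm, bterm. rewrite Cnorm2_b_m by lia.
  set (b := beta gamma sigma L (S n)).
  pose proof (beta_pos (S n) ltac:(lia)) as hb. fold b in hb.
  pose proof (sinh_pos b hb). pose proof kap_pos.
  apply sqrt_le_of_le_sq; [apply Rmult_le_pos; [pose proof (sqrt_pos 2); nra|]; left; now apply Rdiv_lt_0_compat|].
  replace ((sqrt 2 * kap * (b / sinh b)) ^ 2) with
    ((sqrt 2 * sqrt 2) * kap ^ 2 * b ^ 2 / sinh b ^ 2) by (field; lra).
  rewrite sqrt_sqrt by lra.
  pose proof (sinh_sq_add_sin_sq_ge b hb). pose proof (pow2_ge_0 (sin b)).
  unfold Rdiv. apply Rmult_le_compat_l; [pose proof (pow2_ge_0 kap); pose proof (pow2_ge_0 b); nra|].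
  apply Rinv_le_contravar; [apply pow_lt|]; lra.
Qed.

(* [beta_m / sinh beta_m <= 240 / beta_m ^ 4], and [beta_m ^ 2] is linear in [m]. *)
Lemma ex_series_bterm : ex_series (bterm gamma sigma L).
Proof.
  set (g := gamma / 2 * sigma ^ 2 * L ^ 2).
  assert (hgp : 0 < g).
  { unfold g. pose proof (pow_lt sigma 2 hs). pose proof (pow_lt L 2 hL).
    apply Rmult_lt_0_compat; [apply Rmult_lt_0_compat|]; lra. }
  apply (ex_series_Rabs_le _ (fun n => (480 / g ^ 2) * / (INR (S n) * INR (S (S n))))).
  2:{ apply (ex_series_scal_l _ _ ex_series_inv_consecutive). }
  intro n. rewrite Rabs_right by (left; apply bterm_pos).
  unfold bterm. set (b := beta gamma sigma L (S n)).
  pose proof (beta_pos (S n) ltac:(lia)) as hb. fold b in hb.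
  pose proof (sinh_ge_pow5 b ltac:(lra)).
  assert (hb2 : b ^ 2 = INR (S n) * g) by apply beta_sq.
  assert (h5 : 0 < b ^ 5 / 240) by (pose proof (pow_lt b 5 hb); lra).
  apply Rle_trans with (b / (b ^ 5 / 240)).
  { unfold Rdiv at 1 2. apply Rmult_le_compat_l; [lra|]. now apply Rinv_le_contravar. }
  replace (b / (b ^ 5 / 240)) with (240 / (b ^ 2) ^ 2) by (field; lra).
  rewrite hb2, (S_INR (S n)). set (x := INR (S n)).
  assert (hx : 1 <= x) by (unfold x; apply (le_INR 1); lia).
  replace (240 / (x * g) ^ 2) with (240 / g ^ 2 * / (x * x)) by (field; nra).
  replace (480 / g ^ 2 * / (x * (x + 1))) with (240 / g ^ 2 * / (x * (x + 1) / 2)) by (field; nra).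
  apply Rmult_le_compat_l; [apply Rcomplements.Rdiv_le_0_compat; [lra|apply pow_lt; lra]|].
  apply Rinv_le_contravar; nra.
Qed.

Lemma Cnorm_Cm_le m r r0 : (1 <= m)%nat -> 0 <= r -> 0 <= r0 ->
  Cnorm (Cm gamma sigma L m r r0) <= r * Cnorm (b_m gamma sigma L m) *
    exp (- ((r ^ 2 + r0 ^ 2) * fst (a_m gamma sigma L m))) * (Iser 0 (kap * r * r0) - / 2).
Proof.
  intros hm hr hr0. unfold Cm. rewrite !Cnorm_mul, Cnorm_scal, Cnorm_exp, Rabs_right by lra.
  rewrite <- Rmult_assoc. cbn [fst Cneg Cscal].
  apply Rmult_le_compat_l.
  { apply Rmult_le_pos; [apply Rmult_le_pos; auto; apply Cnorm_nonneg|left; apply exp_pos]. }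
  set (b := b_m gamma sigma L m).
  pose proof (Cnorm_b_m_le_kap m hm) as hbk. fold b in hbk.
  pose proof (Cnorm_nonneg (Cscal (2 * r0 * r) b)).
  eapply Rle_trans; [apply Cnorm_BesselI_le|].
  eapply Rle_trans; [apply Iser_le_Iser0; auto; lra|].
  apply Rplus_le_compat_r, Iser_mono. split; [lra|].
  rewrite Cnorm_scal, Rabs_right by (apply Rle_ge; repeat apply Rmult_le_pos; lra).
  pose proof (Cnorm_nonneg b). pose proof (Rmult_le_pos _ _ hr0 hr). nra.
Qed.

Definition pdens_term (r phi r0 phi0 : R) (n : nat) : R :=
  fst (Cmul (Cm gamma sigma L (S n) r r0) (Cexp (0, INR (S n) * (phi - phi0 - gamma * r0 ^ 2 * L)))).

Lemma pdens_term_abs_le r phi r0 phi0 : 0 <= r -> 0 <= r0 -> forall n,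
  Rabs (pdens_term r phi r0 phi0 n)
  <= sqrt 2 * r * kap * exp (- ((r ^ 2 + r0 ^ 2) * fst (a_m gamma sigma L 1)))
     * (Iser 0 (kap * r * r0) - / 2) * bterm gamma sigma L n.
Proof.
  intros hr hr0 n. unfold pdens_term.
  eapply Rle_trans; [apply Rabs_fst_le_Cnorm|].
  rewrite Cnorm_mul, Cnorm_exp. cbn [fst]. rewrite exp_0, Rmult_1_r.
  eapply Rle_trans; [apply Cnorm_Cm_le; auto; lia|].
  pose proof (Cnorm_b_m_le_bterm n).
  assert (exp (- ((r ^ 2 + r0 ^ 2) * fst (a_m gamma sigma L (S n))))
          <= exp (- ((r ^ 2 + r0 ^ 2) * fst (a_m gamma sigma L 1)))).
  { apply exp_le_compat. pose proof (re_a_1_le (S n) ltac:(lia)).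
    pose proof (pow2_ge_0 r). pose proof (pow2_ge_0 r0). nra. }
  assert (1 <= Iser 0 (kap * r * r0))
    by (apply Iser0_ge_1; pose proof kap_pos; repeat apply Rmult_le_pos; lra).
  pose proof (Cnorm_nonneg (b_m gamma sigma L (S n))).
  pose proof (exp_pos (- ((r ^ 2 + r0 ^ 2) * fst (a_m gamma sigma L (S n))))).
  replace (sqrt 2 * r * kap * exp (- ((r ^ 2 + r0 ^ 2) * fst (a_m gamma sigma L 1)))
           * (Iser 0 (kap * r * r0) - / 2) * bterm gamma sigma L n)
    with (r * (sqrt 2 * kap * bterm gamma sigma L n)
          * exp (- ((r ^ 2 + r0 ^ 2) * fst (a_m gamma sigma L 1))) * (Iser 0 (kap * r * r0) - / 2))
    by ring.
  apply Rmult_le_compat_r; [lra|].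
  apply Rmult_le_compat; [apply Rmult_le_pos; lra|lra|apply Rmult_le_compat_l; lra|lra].
Qed.

Lemma Rseries_pdens_term_abs_le r phi r0 phi0 : 0 <= r -> 0 <= r0 ->
  Rabs (Rseries (pdens_term r phi r0 phi0))
  <= sqrt 2 * r * kap * exp (- ((r ^ 2 + r0 ^ 2) * fst (a_m gamma sigma L 1)))
     * (Iser 0 (kap * r * r0) - / 2) * Rseries (bterm gamma sigma L).
Proof.
  intros hr hr0.
  pose proof (pdens_term_abs_le r phi r0 phi0 hr hr0) as hb.
  pose proof (ex_series_scal_l (sqrt 2 * r * kap * exp (- ((r ^ 2 + r0 ^ 2) * fst (a_m gamma sigma L 1)))
     * (Iser 0 (kap * r * r0) - / 2)) _ ex_series_bterm) as hex.
  rewrite !Rseries_Series by (auto using ex_series_bterm; apply (ex_series_Rabs_le _ _ hb hex)).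
  rewrite <- Series_scal_l. now apply Series_abs_le.
Qed.

Lemma pR_eq r r0 : 0 <= r -> 0 <= r0 -> pR gamma sigma L r r0 =
  2 * r * kap * exp (- (kap * (r ^ 2 + r0 ^ 2))) * Iser 0 (kap * r * r0).
Proof.
  intros hr hr0. pose proof kap_pos. unfold pR.
  assert (0 < sigma ^ 2 * L) by (apply Rmult_lt_0_compat; [apply pow_lt|]; lra).
  rewrite BesselI_R_0.
  2:{ unfold Rdiv. repeat apply Rmult_le_pos; try lra. left; now apply Rinv_0_lt_compat. }
  replace (2 * r * r0 / (sigma ^ 2 * L) / 2) with (kap * r * r0) by (unfold kap; field; lra).
  replace (- (r ^ 2 + r0 ^ 2) / (sigma ^ 2 * L)) with (- (kap * (r ^ 2 + r0 ^ 2)))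
    by (unfold kap; field; lra).
  unfold kap; field; lra.
Qed.

Lemma bterm_summable : exists l : R, infinite_sum (bterm gamma sigma L) l.
Proof. exists (Series (bterm gamma sigma L)). apply is_series_Reals, Series_correct, ex_series_bterm. Qed.

Lemma Rseries_bterm_pos : 0 < Rseries (bterm gamma sigma L).
Proof.
  rewrite Rseries_Series by apply ex_series_bterm.
  pose proof (bterm_pos 0).
  pose proof (Series_ge_first _ (fun n => Rlt_le _ _ (bterm_pos n)) ex_series_bterm). lra.
Qed.

Lemma pdens_lt_upper r r0 phi phi0 : 0 < r -> 0 <= r0 ->
  pdens gamma sigma L r phi r0 phi0 < k_u gamma sigma L * pR gamma sigma L r r0.
Proof.
  intros hr hr0. pose proof kap_pos. pose proof Rseries_bterm_pos. pose proof PI_RGT_0.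
  assert (0 < sqrt 2) by (apply sqrt_lt_R0; lra).
  pose proof (Rseries_pdens_term_abs_le r phi r0 phi0 ltac:(lra) hr0) as hS.
  apply Rabs_le_between in hS.
  unfold pdens, k_u. fold (pdens_term r phi r0 phi0). rewrite pR_eq by lra.
  set (J := Iser 0 (kap * r * r0)) in *. set (B := Rseries (bterm gamma sigma L)) in *.
  set (E := exp (- (kap * (r ^ 2 + r0 ^ 2)))).
  set (E1 := exp (- ((r ^ 2 + r0 ^ 2) * fst (a_m gamma sigma L 1)))) in hS.
  assert (1 <= J) by (apply Iser0_ge_1; repeat apply Rmult_le_pos; lra).
  assert (0 < E1 <= E).
  { split; [apply exp_pos|apply exp_le_compat]. pose proof re_a_1_gt_kap.
    pose proof (pow2_ge_0 r). pose proof (pow2_ge_0 r0). nra. }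
  replace (/ (2 * PI) * (1 + sqrt 2 * B) * (2 * r * kap * E * J)) with
    (/ (2 * PI) * (2 * r * kap * E * J) + / PI * (sqrt 2 * r * kap * E * J * B)) by (field; lra).
  apply Rplus_lt_compat_l, Rmult_lt_compat_l; [apply Rinv_0_lt_compat; lra|].
  apply Rle_lt_trans with (sqrt 2 * r * kap * E1 * (J - / 2) * B); [lra|].
  assert (0 < sqrt 2 * r * kap * B) by (repeat apply Rmult_lt_0_compat; lra).
  assert (E1 * (J - / 2) < E * J) by nra.
  nra.
Qed.

Lemma pR_le_gaussian r r0 : 0 <= r -> 0 <= r0 ->
  pR gamma sigma L r r0 <= 2 * r / (sigma ^ 2 * L) * exp (- (r - r0) ^ 2 / (sigma ^ 2 * L)) /\
  2 * r / (sigma ^ 2 * L) * exp (- (r - r0) ^ 2 / (sigma ^ 2 * L)) <= 2 * r / (sigma ^ 2 * L).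
Proof.
  intros hr hr0. pose proof kap_pos. rewrite pR_eq by lra.
  assert (0 < sigma ^ 2 * L) by (apply Rmult_lt_0_compat; [apply pow_lt|]; lra).
  replace (2 * r / (sigma ^ 2 * L)) with (2 * r * kap) by (unfold kap; field; lra).
  replace (- (r - r0) ^ 2 / (sigma ^ 2 * L))
    with (- (kap * (r ^ 2 + r0 ^ 2)) + 2 * (kap * r * r0)) by (unfold kap; field; lra).
  assert (exp (- (kap * (r ^ 2 + r0 ^ 2)) + 2 * (kap * r * r0)) <= 1).
  { rewrite <- exp_0. apply exp_le_compat. pose proof (pow2_ge_0 (r - r0)). nra. }
  rewrite exp_plus in *.
  assert (Iser 0 (kap * r * r0) <= exp (2 * (kap * r * r0)))
    by (apply Iser0_le_exp; repeat apply Rmult_le_pos; lra).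
  assert (0 <= 2 * r * kap) by nra.
  pose proof (exp_pos (- (kap * (r ^ 2 + r0 ^ 2)))).
  split.
  - rewrite <- Rmult_assoc. apply Rmult_le_compat_l; nra.
  - rewrite <- (Rmult_1_r (2 * r * kap)) at 2. apply Rmult_le_compat_l; lra.
Qed.

Lemma pdens_ge_lower r r0 phi phi0 : 0 <= r -> 0 <= r0 ->
  pdens gamma sigma L r phi r0 phi0
  >= / (2 * PI) * pR gamma sigma L r r0 * (1 - xi gamma sigma L r0).
Proof.
  intros hr hr0. pose proof kap_pos. pose proof Rseries_bterm_pos. pose proof PI_RGT_0.
  pose proof re_a_1_gt_kap. assert (0 < sqrt 2) by (apply sqrt_lt_R0; lra).
  pose proof (Rseries_pdens_term_abs_le r phi r0 phi0 hr hr0) as hS.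
  apply Rabs_le_between in hS.
  unfold pdens, xi. fold (pdens_term r phi r0 phi0). fold kap. rewrite pR_eq by lra.
  set (J := Iser 0 (kap * r * r0)) in *. set (B := Rseries (bterm gamma sigma L)) in *.
  set (A1 := fst (a_m gamma sigma L 1)) in *.
  assert (1 <= J) by (apply Iser0_ge_1; repeat apply Rmult_le_pos; lra).
  assert (hE : exp (- (kap * (r ^ 2 + r0 ^ 2))) * exp (- (A1 - kap) * r0 ^ 2)
               = exp (- (kap * r ^ 2 + A1 * r0 ^ 2))) by (rewrite <- exp_plus; f_equal; ring).
  assert (exp (- ((r ^ 2 + r0 ^ 2) * A1)) <= exp (- (kap * r ^ 2 + A1 * r0 ^ 2))).
  { apply exp_le_compat. pose proof (pow2_ge_0 r). nra. }
  pose proof (exp_pos (- ((r ^ 2 + r0 ^ 2) * A1))).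
  replace (/ (2 * PI) * (2 * r * kap * exp (- (kap * (r ^ 2 + r0 ^ 2))) * J)
           * (1 - sqrt 2 * exp (- (A1 - kap) * r0 ^ 2) * B))
    with (/ (2 * PI) * (2 * r * kap * exp (- (kap * (r ^ 2 + r0 ^ 2))) * J)
          - / PI * (sqrt 2 * r * kap * exp (- (kap * r ^ 2 + A1 * r0 ^ 2)) * J * B))
    by (rewrite <- hE; field; lra).
  apply Rle_ge, Rplus_le_compat_l. rewrite Ropp_mult_distr_r.
  apply Rmult_le_compat_l; [left; apply Rinv_0_lt_compat; lra|].
  assert (0 <= sqrt 2 * r * kap * B) by (repeat apply Rmult_le_pos; lra).
  assert (exp (- ((r ^ 2 + r0 ^ 2) * A1)) * (J - / 2) <= exp (- (kap * r ^ 2 + A1 * r0 ^ 2)) * J)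
    by nra.
  nra.
Qed.

Lemma xi_tendsto_0 eps : 0 < eps ->
  exists M : R, forall r0 : R, M <= r0 -> Rabs (xi gamma sigma L r0) < eps.
Proof.
  intro heps. pose proof re_a_1_gt_kap.
  destruct (gaussian_decay (sqrt 2 * Rseries (bterm gamma sigma L))
              (fst (a_m gamma sigma L 1) - kap) ltac:(lra) eps heps) as [M hM].
  exists M. intros r0 hr0. unfold xi. fold kap.
  replace (sqrt 2 * exp (- (fst (a_m gamma sigma L 1) - kap) * r0 ^ 2) * Rseries (bterm gamma sigma L))
    with (sqrt 2 * Rseries (bterm gamma sigma L) * exp (- (fst (a_m gamma sigma L 1) - kap) * r0 ^ 2))
    by ring.
  now apply hM.
Qed.

End Channel.

Theorem mainTheorem7 (gamma sigma L : R) (hg : 0 < gamma) (hs : 0 < sigma) (hL : 0 < L) :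
  (exists l : R, infinite_sum (bterm gamma sigma L) l) /\
  (forall r r0 phi phi0 : R, 0 < r -> 0 <= r0 ->
     0 <= phi < 2 * PI -> 0 <= phi0 < 2 * PI ->
     pdens gamma sigma L r phi r0 phi0 < k_u gamma sigma L * pR gamma sigma L r r0) /\
  (forall r r0 : R, 0 <= r -> 0 <= r0 ->
     pR gamma sigma L r r0
       <= 2 * r / (sigma ^ 2 * L) * exp (- (r - r0) ^ 2 / (sigma ^ 2 * L)) /\
     2 * r / (sigma ^ 2 * L) * exp (- (r - r0) ^ 2 / (sigma ^ 2 * L))
       <= 2 * r / (sigma ^ 2 * L)) /\
  (forall r r0 phi phi0 : R, 0 <= r -> 0 <= r0 ->
     pdens gamma sigma L r phi r0 phi0
       >= / (2 * PI) * pR gamma sigma L r r0 * (1 - xi gamma sigma L r0)) /\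
  (forall eps : R, 0 < eps -> exists M : R, forall r0 : R, M <= r0 ->
     Rabs (xi gamma sigma L r0) < eps).
Proof.
  split; [|split; [|split; [|split]]].
  - now apply bterm_summable.
  - intros r r0 phi phi0 hr hr0 _ _. now apply pdens_lt_upper.
  - intros r r0. now apply pR_le_gaussian.
  - intros r r0 phi phi0. now apply pdens_ge_lower.
  - intros eps. now apply xi_tendsto_0.
Qed.
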